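(* Let $A, B \in \mathbb{R}^{n\times n}_+$ be entrywise nonnegative Schur-stable matrices. Let $\mathcal{D}_{A,B}$ denote the set of diagonal matrices $D\in\mathbb{R}^{n\times n}$ with nonnegative diagonal entries such that $A-D$ and $B-D$ are both entrywise nonnegative. For $D\in\mathcal{D}_{A,B}$ let $$M=\begin{pmatrix} A-D & D\\ D & B-D\end{pmatrix}\in\mathbb{R}^{2n\times 2n}.$$ Consider the statements: (i) there exists a diagonal matrix $E\succ 0$ with $A^TEA-E\prec 0$ and $B^TEB-E\prec 0$; (ii) there exists a diagonal matrix $E\succ 0$ with $(A-I)^TE+E(A-I)\prec 0$ and $(B-I)^TE+E(B-I)\prec 0$; (iii) for every $D\in\mathcal{D}_{A,B}$, the matrix $M$ is Schur-stable. Then (i) $\Rightarrow$ (ii) $\Rightarrow$ (iii).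
   Context: A real square matrix is Schur-stable if its spectral radius is strictly less than $1$. For a symmetric matrix $P$, $P\succ 0$ ($P\prec 0$) means $P$ is positive (negative) definite. $\mathbb{R}^{n\times n}_+$ denotes the set of entrywise nonnegative $n\times n$ real matrices. *)

From HB Require Import structures.
From mathcomp Require Import all_boot all_order all_algebra.
From mathcomp Require Import reals complex.
Set Implicit Arguments. Unset Strict Implicit. Unset Printing Implicit Defensive.
Import Order.TTheory GRing.Theory Num.Theory.
Local Open Scope ring_scope.

Definition nonneg_mx (R : realType) (m n : nat) (A : 'M[R]_(m, n)) : Prop :=
  forall i j, 0 <= A i j.

Definition schur_stable (R : realType) (n : nat) (A : 'M[R]_n) : Prop :=
  forall lambda : R[i],
    eigenvalue (map_mx (fun x : R => (x%:C)%C) A) lambda -> `|lambda| < 1.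

Definition posdef (R : realType) (n : nat) (P : 'M[R]_n) : Prop :=
  P^T = P /\ forall x : 'cV[R]_n, x != 0 -> 0 < (x^T *m P *m x) 0 0.

Definition negdef (R : realType) (n : nat) (P : 'M[R]_n) : Prop :=
  P^T = P /\ forall x : 'cV[R]_n, x != 0 -> (x^T *m P *m x) 0 0 < 0.

Definition DAB (R : realType) (n : nat) (A B D : 'M[R]_n) : Prop :=
  is_diag_mx D /\ (forall i, 0 <= D i i) /\ nonneg_mx (A - D) /\ nonneg_mx (B - D).

Definition Mmat (R : realType) (n : nat) (A B D : 'M[R]_n) : 'M[R]_(n + n) :=
  block_mx (A - D) D D (B - D).

(* (i) => (ii): (A - I)^T E + E (A - I) = (A^T E A - E) - (A - I)^T E (A - I).
   (ii) => (iii): for the weight E (+) E and x = (x1, x2), the Lyapunov form of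
   M - I equals those of A - I at x1 and of B - I at x2 minus
   2 (x1 - x2)^T E D (x1 - x2), so M - I again has a diagonal Lyapunov weight.
   Such a nonnegative M is Schur stable: an eigenvalue of modulus >= 1 yields,
   by the triangle inequality, a nonzero row w >= 0 with w <= w M, and at the
   point x with x^T E = w the Lyapunov form equals 2 w (M - I) x >= 0. *)

From HB Require Import structures.
From mathcomp Require Import all_boot all_order all_algebra.
From mathcomp Require Import reals complex.
From mathcomp Require Import ring lra.
Set Implicit Arguments. Unset Strict Implicit. Unset Printing Implicit Defensive.
Import Order.TTheory GRing.Theory Num.Theory.
Local Open Scope ring_scope.

Definition qform (R : pzRingType) n (P : 'M[R]_n) (x : 'cV[R]_n) : R :=
  (x^T *m P *m x) 0 0.

Definition lyap_mx (R : pzRingType) n (E S : 'M[R]_n) : 'M[R]_n :=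
  S^T *m E + E *m S.

Section QuadraticForms.
Variables (R : comPzRingType) (n : nat).
Implicit Types (E S A P Q : 'M[R]_n) (x : 'cV[R]_n).

Lemma qform0 P : qform P 0 = 0.
Proof. by rewrite /qform trmx0 !mul0mx mxE. Qed.

Lemma qformB P Q x : qform (P - Q) x = qform P x - qform Q x.
Proof. by rewrite /qform mulmxBr mulmxBl !mxE. Qed.

Lemma qform_congr E A x : qform (A^T *m E *m A) x = qform E (A *m x).
Proof. by rewrite /qform trmx_mul !mulmxA. Qed.

Lemma trmx_lyap_mx E S : E^T = E -> (lyap_mx E S)^T = lyap_mx E S.
Proof. by move=> ET; rewrite /lyap_mx linearD /= !trmx_mul ET trmxK addrC. Qed.

Lemma qform_lyap_mx E S x :
  E^T = E -> qform (lyap_mx E S) x = 2 * (x^T *m E *m S *m x) 0 0.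
Proof.
move=> ET; rewrite /qform /lyap_mx mulmxDr mulmxDl !mulmxA mxE.
have -> : x^T *m S^T *m E *m x = (x^T *m E *m S *m x)^T.
  by rewrite !trmx_mul trmxK ET !mulmxA.
by rewrite mxE mulr_natl mulr2n.
Qed.

Lemma lyap_mx_subr1 E A :
  lyap_mx E (A - 1%:M) = (A^T *m E *m A - E) - (A - 1%:M)^T *m E *m (A - 1%:M).
Proof.
rewrite /lyap_mx linearB /= trmx1 !mulmxBl !mulmxBr !mul1mx !mulmx1.
by apply/matrixP => i j; rewrite !mxE; ring.
Qed.

Lemma qform_diag_mx (d : 'rV[R]_n) x :
  qform (diag_mx d) x = \sum_i d 0 i * x i 0 ^+ 2.
Proof.
rewrite /qform mul_mx_diag mxE; apply: eq_bigr => i _.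
by rewrite !mxE expr2 mulrCA mulrA.
Qed.

End QuadraticForms.

Section Definiteness.
Variables (R : realType) (n : nat).
Implicit Types (E P A : 'M[R]_n) (x : 'cV[R]_n).

Lemma posdef_qform_ge0 E x : posdef E -> 0 <= qform E x.
Proof. by case=> _ Epos; have [->|/Epos/ltW] := eqVneq x 0; rewrite ?qform0. Qed.

Lemma negdef_qform_le0 P x : negdef P -> qform P x <= 0.
Proof. by case=> _ Pneg; have [->|/Pneg/ltW] := eqVneq x 0; rewrite ?qform0. Qed.

Lemma posdef_diag_gt0 E j : posdef E -> 0 < E j j.
Proof.
case=> _ Epos; have ej_neq0 : delta_mx j 0 != 0 :> 'cV[R]_n.
  by apply/eqP => /matrixP/(_ j 0); rewrite !mxE !eqxx => /eqP; rewrite oner_eq0.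
by have := Epos _ ej_neq0; rewrite trmx_delta -rowE -colE !mxE.
Qed.

Lemma negdef_lyap_of_stein E A :
  posdef E -> negdef (A^T *m E *m A - E) -> negdef (lyap_mx E (A - 1%:M)).
Proof.
move=> Epos [_ Sneg]; split; first by rewrite trmx_lyap_mx //; case: Epos.
move=> x x_neq0; have Sx : qform (A^T *m E *m A - E) x < 0 := Sneg x x_neq0.
have := posdef_qform_ge0 ((A - 1%:M) *m x) Epos.
rewrite -/(qform _ x) lyap_mx_subr1 qformB qform_congr; lra.
Qed.

End Definiteness.

Section DiagonalLyapunov.
Variables (R : realType) (m : nat).
Implicit Types (E S M : 'M[R]_m) (w : 'rV[R]_m).

Lemma nonneg_row_eq0_of_diag_lyap E S w :
  is_diag_mx E -> (forall i, 0 < E i i) -> negdef (lyap_mx E S) ->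
  (forall j, 0 <= w 0 j) -> (forall j, 0 <= (w *m S) 0 j) -> w = 0.
Proof.
move=> /diag_mxP[e ->] E_gt0 [_ Sneg] w_ge0 wS_ge0.
have e_gt0 k : 0 < e 0 k by have := E_gt0 k; rewrite mxE eqxx.
have [//|/rV0Pn[j wj_neq0]] := eqVneq w 0.
set x := \col_k (w 0 k / e 0 k).
have xTE : x^T *m diag_mx e = w.
  by apply/rowP => k; rewrite mul_mx_diag !mxE divfK // gt_eqF.
have x_neq0 : x != 0.
  by apply/cV0Pn; exists j; rewrite mxE mulf_neq0 // invr_eq0 gt_eqF.
have := Sneg x x_neq0; rewrite -/(qform _ x) qform_lyap_mx ?tr_diag_mx //.
rewrite xTE mxE pmulr_rlt0 // ltNge => /negP[].
by apply: sumr_ge0 => k _; rewrite [x k 0]mxE mulr_ge0 // divr_ge0 // ltW.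
Qed.

Lemma nonneg_mx_eigen_row M (lam : R[i]) :
  nonneg_mx M -> eigenvalue (map_mx (fun x : R => x%:C%C) M) lam ->
  exists2 w : 'rV[R]_m, w != 0 &
    (forall j, 0 <= w 0 j) /\ forall j, Normc.normc lam * w 0 j <= (w *m M) 0 j.
Proof.
move=> M_ge0 /eigenvalueP[v vM v_neq0].
exists (\row_j Normc.normc (v 0 j)).
  have /rV0Pn[j vj_neq0] := v_neq0; apply/rV0Pn; exists j; rewrite mxE.
  by apply: contra vj_neq0 => /eqP/Normc.eq0_normc->.
split=> j; rewrite !mxE; first by rewrite -ler0c; exact: (normr_ge0 (v 0 j)).
have /(congr1 (fun u : 'rV_m => u 0 j)) := vM; rewrite !mxE => vMj.
rewrite -lecR rmorphM rmorph_sum /=.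
have -> : ((Normc.normc lam)%:C * (Normc.normc (v 0 j))%:C)%C = `|lam * v 0 j|.
  by rewrite normrM.
rewrite -vMj; apply: le_trans (ler_norm_sum _ _ _) _; apply: ler_sum => i _.
by rewrite normrM rmorphM /= [X in _ * X]ger0_norm !mxE // ler0c.
Qed.

Lemma schur_stable_of_diag_lyap M E :
  nonneg_mx M -> is_diag_mx E -> (forall i, 0 < E i i) ->
  negdef (lyap_mx E (M - 1%:M)) -> schur_stable M.
Proof.
move=> M_ge0 Ediag E_gt0 Lneg lam /(nonneg_mx_eigen_row M_ge0)[w w_neq0 [w_ge0 wM]].
rewrite -[1]/(1%:C%C) [`|_|]/(Normc.normc lam)%:C%C ltcR ltNge.
apply: contra w_neq0 => lam_ge1; apply/eqP.
apply: (nonneg_row_eq0_of_diag_lyap Ediag E_gt0 Lneg w_ge0) => j.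
rewrite mulmxBr mulmx1 [X in 0 <= X]mxE [X in _ + X]mxE subr_ge0.
by apply: le_trans (wM j); rewrite ler_peMl.
Qed.

End DiagonalLyapunov.

Section BlockMatrix.
Variables (R : realType) (n : nat).
Implicit Types (E A B D : 'M[R]_n) (x : 'cV[R]_n).

Lemma Mmat_nonneg A B D : DAB A B D -> nonneg_mx (Mmat A B D).
Proof.
move=> [/is_diag_mxP Ddiag [D_ge0 [AD_ge0 BD_ge0]]] i j.
have D_entry_ge0 k l : 0 <= D k l by have [->|/Ddiag->] := eqVneq k l.
rewrite /Mmat -(splitK i) -(splitK j).
case: (split i) => i'; case: (split j) => j' /=.
- by rewrite block_mxEul.
- by rewrite block_mxEur.
- by rewrite block_mxEdl.
- by rewrite block_mxEdr.
Qed.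

Lemma qform_lyap_Mmat E A B D x1 x2 :
  E^T = E -> (E *m D)^T = E *m D ->
  qform (lyap_mx (block_mx E 0 0 E) (Mmat A B D - 1%:M)) (col_mx x1 x2)
  = qform (lyap_mx E (A - 1%:M)) x1 + qform (lyap_mx E (B - 1%:M)) x2
    - 2 * qform (E *m D) (x1 - x2).
Proof.
move=> ET EDT; have FT : (block_mx E 0 0 E)^T = block_mx E 0 0 E.
  by rewrite tr_block_mx !trmx0 ET.
have cross : x2^T *m E *m D *m x1 = x1^T *m E *m D *m x2.
  have <- : (x2^T *m (E *m D) *m x1)^T = x1^T *m E *m D *m x2.
    by rewrite trmx_mul trmx_mul EDT trmxK !mulmxA.
  by rewrite !mulmxA; apply/matrixP => i j; rewrite !ord1 [RHS]mxE.
rewrite !qform_lyap_mx // /Mmat (scalar_mx_block n n) opp_block_mx add_block_mx.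
rewrite !oppr0 !addr0 tr_col_mx mul_row_block !mulmx0 addr0 add0r mul_row_block.
rewrite mul_row_col /qform [(x1 - x2)^T]linearB /=.
rewrite !(mulmxDl, mulmxBl, mulmxDr, mulmxBr) !(mulmxN, mulNmx) !mulmxA cross.
by rewrite !mxE; ring.
Qed.

Lemma negdef_lyap_Mmat E A B D :
  is_diag_mx E -> (forall i, 0 <= E i i) -> is_diag_mx D -> (forall i, 0 <= D i i) ->
  negdef (lyap_mx E (A - 1%:M)) -> negdef (lyap_mx E (B - 1%:M)) ->
  negdef (lyap_mx (block_mx E 0 0 E) (Mmat A B D - 1%:M)).
Proof.
move=> /diag_mxP[e ->] E_ge0 /diag_mxP[d ->] D_ge0 LA LB.
have ET := tr_diag_mx e; have EDT : (diag_mx e *m diag_mx d)^T = diag_mx e *m diag_mx d.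
  by rewrite mulmx_diag tr_diag_mx.
split; first by rewrite trmx_lyap_mx // tr_block_mx !trmx0 ET.
move=> x; rewrite -(vsubmxK x) -/(qform _ _) qform_lyap_Mmat //.
set x1 := usubmx x; set x2 := dsubmx x => x_neq0.
have ED_ge0 : 0 <= qform (diag_mx e *m diag_mx d) (x1 - x2).
  rewrite mulmx_diag qform_diag_mx; apply: sumr_ge0 => i _.
  have := E_ge0 i; have := D_ge0 i; rewrite !mxE !eqxx => di ei.
  by rewrite mulr_ge0 ?sqr_ge0 ?mulr_ge0.
have := negdef_qform_le0 x1 LA; have := negdef_qform_le0 x2 LB.
have [x1_eq0 | x1_neq0] := eqVneq x1 0; last first.
  by have := LA.2 x1 x1_neq0; rewrite -/(qform _ x1); lra.
have x2_neq0 : x2 != 0 by apply: contraNneq x_neq0 => ->; rewrite x1_eq0 col_mx0.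
by have := LB.2 x2 x2_neq0; rewrite -/(qform _ x2); lra.
Qed.

End BlockMatrix.

Theorem theorem2 (R : realType) (n : nat) (A B : 'M[R]_n) :
  nonneg_mx A -> nonneg_mx B -> schur_stable A -> schur_stable B ->
  let st1 := exists E : 'M[R]_n, is_diag_mx E /\ posdef E /\
               negdef (A^T *m E *m A - E) /\ negdef (B^T *m E *m B - E) in
  let st2 := exists E : 'M[R]_n, is_diag_mx E /\ posdef E /\
               negdef ((A - 1%:M)^T *m E + E *m (A - 1%:M)) /\
               negdef ((B - 1%:M)^T *m E + E *m (B - 1%:M)) in
  let st3 := forall D : 'M[R]_n, DAB A B D -> schur_stable (Mmat A B D) in
  (st1 -> st2) /\ (st2 -> st3).
Proof.
move=> _ _ _ _ /=; split.
  move=> [E [Ediag [Epos [SA SB]]]]; exists E.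
  by do 2!split => //; split; apply: negdef_lyap_of_stein.
move=> [E [Ediag [Epos [LA LB]]]] D DAB_D.
have E_gt0 i : 0 < E i i := posdef_diag_gt0 i Epos.
have [Ddiag [D_ge0 _]] := DAB_D.
apply: (schur_stable_of_diag_lyap (Mmat_nonneg DAB_D) _ _
          (negdef_lyap_Mmat Ediag (fun i => ltW (E_gt0 i)) Ddiag D_ge0 LA LB)).
- by rewrite is_diag_block_mx // !eqxx Ediag.
- by move=> i; rewrite -(splitK i); case: (split i) => k /=;
    rewrite ?block_mxEul ?block_mxEdr.
Qed.
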